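(* Let $q$ be a prime power, $1\le k\le n-1$, and let $\mathcal{L}$ be a set of affine $k$-spaces of $\mathrm{AG}(n,q)$ with $|\mathcal{L}|=x\left[{n\atop k}\right]_q$ such that $|\mathcal{L}\cap\mathcal{S}|=x$ for every $k$-spread $\mathcal{S}$ of $\mathrm{AG}(n,q)$. Let $\tau_A$ be an arbitrary affine subspace of $\mathrm{AG}(n,q)$ of dimension $i\ge\max\{k+1,3\}$, regarded as the affine space $\mathrm{AG}(i,q)$, and let $[\tau_A]_k$ be the set of affine $k$-spaces contained in $\tau_A$. Then, with $c=|\mathcal{L}\cap[\tau_A]_k|/\left[{i\atop k}\right]_q$, every $k$-spread $\mathcal{S}$ of $\tau_A$ satisfies $|(\mathcal{L}\cap[\tau_A]_k)\cap\mathcal{S}|=c$.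
   Context: $\mathrm{AG}(n,q)$ is $\mathrm{PG}(n,q)$ with a hyperplane $\pi_\infty$ removed; affine points are points outside $\pi_\infty$, affine $k$-spaces are $k$-dimensional projective subspaces not contained in $\pi_\infty$. A $k$-spread of an affine space is a set of its affine $k$-spaces that pairwise share no affine point and cover all its affine points. $\left[{a\atop b}\right]_q=\frac{(q^a-1)\cdots(q^{a-b+1}-1)}{(q^b-1)\cdots(q-1)}$. *)

(* AG(n,q) is modelled as the row space 'rV[F]_n over a finite
   field F with #|F| = q (so q is automatically a prime power). *)
From mathcomp Require Import all_boot all_order all_algebra.
Set Implicit Arguments. Unset Strict Implicit. Unset Printing Implicit Defensive.
Import GRing.Theory.
Local Open Scope ring_scope.

(* Gaussian binomial [a over b]_q (exact division in nat). *)
Definition qbinom (q a b : nat) : nat :=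
  ((\prod_(j < b) (q ^ (a - j) - 1)) %/ (\prod_(j < b) (q ^ j.+1 - 1)))%N.

Definition is_flat (F : finFieldType) (n k : nat) (A : {set 'rV[F]_n}) : bool :=
  [exists v : 'rV[F]_n, exists U : 'M[F]_n,
     (\rank U == k) && (A == [set x | (x - v <= U)%MS])].

Definition kflats (F : finFieldType) (n k : nat) (T : {set 'rV[F]_n})
  : {set {set 'rV[F]_n}} :=
  [set A : {set 'rV[F]_n} | is_flat k A & A \subset T].

Definition is_spread (F : finFieldType) (n k : nat) (T : {set 'rV[F]_n})
  (S : {set {set 'rV[F]_n}}) : Prop :=
  [/\ S \subset kflats k T,
      (forall A B, A \in S -> B \in S -> A != B -> [disjoint A & B])
    & cover S = T].

From mathcomp Require Import all_boot all_order all_algebra.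
Set Implicit Arguments. Unset Strict Implicit. Unset Printing Implicit Defensive.

(* Fix a k-dimensional direction W inside tau.  Adding to any k-spread S of
   tau the k-flats of AG(n,q) parallel to W that are not contained in tau
   gives a k-spread of AG(n,q), so |L ∩ S| = x - |L ∩ T| for the fixed set T
   of those outside flats: every k-spread of tau meets L in the same number c
   of flats.  Each parallel class of k-flats of tau is a k-spread of tau, and
   there are [i over k]_q such classes, so |L ∩ [tau]_k| = c [i over k]_q. *)

Lemma big_expnB_split q i k : k <= i ->
  \prod_(j < k) (q ^ i - q ^ j) =
  \prod_(j < k) q ^ j * \prod_(j < k) (q ^ (i - j) - 1).
Proof.
move=> le_ki; rewrite -big_split /=; apply: eq_bigr => j _.
by rewrite mulnBr muln1 -expnD subnKC // ltnW // (leq_trans (ltn_ord j)).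
Qed.

(* [qbinom] is a truncated quotient: this identifies it without proving that the
   division is exact. *)
Lemma qbinom_eq q i k c : 1 < q -> k <= i ->
  c * \prod_(j < k) (q ^ k - q ^ j) = \prod_(j < k) (q ^ i - q ^ j) ->
  qbinom q i k = c.
Proof.
move=> q_gt1 le_ki; rewrite !big_expnB_split //.
have pow_gt0 : 0 < \prod_(j < k) q ^ j.
  by apply: prodn_gt0 => j; rewrite expn_gt0 ltnW.
have -> : \prod_(j < k) (q ^ (k - j) - 1) = \prod_(j < k) (q ^ j.+1 - 1).
  by rewrite (reindex_inj rev_ord_inj) /=; apply: eq_bigr => j _; rewrite subKn.
have den_gt0 : 0 < \prod_(j < k) (q ^ j.+1 - 1).
  by apply: prodn_gt0 => j; rewrite subn_gt0 -(exp1n j.+1) ltn_exp2r.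
rewrite mulnCA => /eqP; rewrite eqn_pmul2l // => /eqP num_eq.
by rewrite /qbinom -num_eq mulnK.
Qed.

Lemma qbinom_gt0 q i k : 1 < q -> k <= i -> 0 < qbinom q i k.
Proof.
move=> q_gt1 le_ki; rewrite /qbinom divn_gt0; last first.
  by apply: prodn_gt0 => j; rewrite subn_gt0 -(exp1n j.+1) ltn_exp2r.
rewrite [X in _ <= X](reindex_inj rev_ord_inj) /=; apply: leq_prod => j _.
rewrite leq_sub2r // leq_exp2l //; apply: leq_trans (leq_sub2r _ le_ki).
by rewrite subKn.
Qed.

Import GRing.Theory.
Local Open Scope ring_scope.

Section AffineFlats.
Variables (F : finFieldType) (n : nat).
Implicit Types (v z : 'rV[F]_n) (U W : 'M[F]_n) (A T : {set 'rV[F]_n}).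

Definition flat_of v U : {set 'rV[F]_n} := [set x | (x - v <= U)%MS].
Definition spanm m (U : 'M[F]_(m, n)) : {set 'rV[F]_n} := [set d | (d <= U)%MS].
Definition dir A : {set 'rV[F]_n} := [set x - y | x in A, y in A].

Lemma subrmx_sub m (a b : 'rV[F]_n) (U : 'M[F]_(m, n)) :
  (a <= U)%MS -> (b <= U)%MS -> (a - b <= U)%MS.
Proof. by move=> aU bU; apply: addmx_sub aU _; rewrite (eqmx_opp b). Qed.

Lemma flat_of_self v U : v \in flat_of v U.
Proof. by rewrite inE subrr sub0mx. Qed.

Lemma mem_flat_of v U z x : z \in flat_of v U ->
  (x \in flat_of v U) = (x - z <= U)%MS.
Proof.
rewrite !inE => zU; apply/idP/idP => xU.
- by have := subrmx_sub xU zU; rewrite opprB addrA subrK.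
- by have := addmx_sub xU zU; rewrite addrA subrK.
Qed.

Lemma dir_flat_of v U : dir (flat_of v U) = spanm U.
Proof.
apply/setP => d; rewrite inE; apply/imset2P/idP => [[x y xU yU ->]|dU].
  by rewrite -(mem_flat_of _ yU).
by exists (d + v) v; rewrite ?inE ?addrK ?subrr ?sub0mx.
Qed.

Lemma flat_of_eq v U v' U' z : z \in flat_of v U -> z \in flat_of v' U' ->
  spanm U = spanm U' -> flat_of v U = flat_of v' U'.
Proof.
move=> zU zU' /setP eqUU'; apply/setP => x.
by rewrite (mem_flat_of _ zU) (mem_flat_of _ zU'); have := eqUU' (x - z); rewrite !inE.
Qed.

Lemma flat_of_sub v U v' U' : v' \in flat_of v U -> (U' <= U)%MS ->
  flat_of v' U' \subset flat_of v U.
Proof.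
move=> v'U sU'U; apply/subsetP => x; rewrite (mem_flat_of _ v'U) inE.
by move/submx_trans; apply.
Qed.

Lemma is_flatP k A :
  reflect (exists v U, \rank U = k /\ A = flat_of v U) (is_flat k A).
Proof.
apply: (iffP existsP) => [[v /existsP [U /andP [/eqP rkU /eqP ->]]]|[v [U [rkU ->]]]].
  by exists v, U.
by exists v; apply/existsP; exists U; rewrite rkU !eqxx.
Qed.

Lemma flat_of_setT : flat_of 0 1%:M = [set: 'rV[F]_n].
Proof. by apply/setP => x; rewrite !inE submx1. Qed.

Lemma flat_of_is_flat v U : is_flat (\rank U) (flat_of v U).
Proof. by apply/is_flatP; exists v, U. Qed.

Lemma kflats_flat_of k v0 U0 A : A \in kflats k (flat_of v0 U0) ->
  exists v W, [/\ \rank W = k, (W <= U0)%MS & A = flat_of v W].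
Proof.
rewrite inE => /andP [/is_flatP [v [W [rkW ->]]] sAT].
exists v, W; split => //; apply/row_subP => j.
have vT : v \in flat_of v0 U0 by apply: (subsetP sAT); rewrite flat_of_self.
have : v + row j W \in flat_of v0 U0.
  by apply: (subsetP sAT); rewrite inE [v + _]addrC addrK row_sub.
by rewrite (mem_flat_of _ vT) [v + _]addrC addrK.
Qed.

Definition parallel_class k T W : {set {set 'rV[F]_n}} :=
  [set A in kflats k T | dir A == spanm W].

Lemma parallel_class_spread v0 U0 W : (W <= U0)%MS ->
  is_spread (\rank W) (flat_of v0 U0) (parallel_class (\rank W) (flat_of v0 U0) W).
Proof.
move=> sWU0; split.
- by apply/subsetP => A /setIdP [].
- move=> A B /setIdP [kA /eqP dA] /setIdP [kB /eqP dB] neqAB.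
  apply/pred0P => z /=; apply/negbTE/andP => -[zA zB].
  move/negP: neqAB; apply; apply/eqP.
  have [v [U [_ _ eA]]] := kflats_flat_of kA.
  have [v' [U' [_ _ eB]]] := kflats_flat_of kB.
  rewrite eA eB in zA zB dA dB *; apply: flat_of_eq zA zB _.
  by rewrite -(dir_flat_of v) -(dir_flat_of v') dA dB.
- apply/setP => z; apply/bigcupP/idP => [[A /setIdP [kA _]]|zT].
    by rewrite inE in kA; case/andP: kA => _ /subsetP; apply.
  exists (flat_of z W); last exact: flat_of_self.
  by rewrite !inE flat_of_is_flat dir_flat_of eqxx flat_of_sub.
Qed.

End AffineFlats.

Section Subspaces.
Variables (F : finFieldType) (n : nat).

Lemma card_spanm m (U : 'M[F]_(m, n)) : #|spanm U| = (#|F| ^ \rank U)%N.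
Proof.
have -> : spanm U = [set w *m row_base U | w in [set: 'rV[F]_(\rank U)]].
  apply/setP => d; rewrite inE -(eq_row_base U); apply/idP/imsetP.
    by case/submxP => w ->; exists w; rewrite ?inE.
  by case=> w _ ->; apply: submxMl.
rewrite card_imset; last exact: row_free_inj (row_base_free U).
by rewrite cardsT card_mx mul1n.
Qed.

Lemma mxrank_adds_row (v : 'rV[F]_n) m (B : 'M[F]_(m, n)) : \rank B = m ->
  (\rank (v + B)%MS == m.+1) = ~~ (v <= B)%MS.
Proof.
move=> rkB; have [vB | vNB] := boolP (v <= B)%MS.
  have eq_vB : (v + B == B)%MS by rewrite /eqmx addsmx_sub vB submx_refl addsmxSr.
  by rewrite (eqmx_rank eq_vB) rkB eqn_leq ltnn andbF.
have := mxrank_leqif_sup (addsmxSr v B).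
rewrite addsmx_sub (negbTE vNB) rkB => /ltn_leqif gt_rk.
have [le_rk _] := mxrank_adds_leqif v B.
rewrite eqn_leq gt_rk andbT (leq_trans le_rk) // rkB -[m.+1]/(1 + m)%N.
by rewrite leq_add2r rank_leq_row.
Qed.

Definition frames p (U : 'M[F]_(p, n)) m : {set 'M[F]_(m, n)} :=
  [set A | (\rank A == m) && (A <= U)%MS].

Definition subspaces p (U : 'M[F]_(p, n)) m : {set {set 'rV[F]_n}} :=
  [set spanm A | A in frames U m].

Section Frames.
Variables (p : nat) (U : 'M[F]_(p, n)).

Lemma frames_dsubmx m (A : 'M[F]_(1 + m, n)) :
  A \in frames U (1 + m) -> dsubmx A \in frames U m.
Proof.
rewrite !inE -{1 2}(vsubmxK A) col_mx_sub => /andP [/eqP rkA /andP [_ ->]].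
rewrite andbT eqn_leq rank_leq_row -(leq_add2l 1) -rkA -addsmxE /=.
apply: leq_trans (mxrank_adds_leqif _ _).1 _.
by rewrite leq_add2r rank_leq_row.
Qed.

Lemma frames_col_mx m (v : 'rV[F]_n) (B : 'M[F]_(m, n)) : B \in frames U m ->
  (col_mx v B \in frames U (1 + m)) = (v \in spanm U :\: spanm B).
Proof.
rewrite !inE => /andP [/eqP rkB sBU].
by rewrite -addsmxE col_mx_sub sBU mxrank_adds_row // andbT andbC.
Qed.

Lemma card_frames m :
  #|frames U m| = (\prod_(j < m) (#|F| ^ \rank U - #|F| ^ j))%N.
Proof.
elim: m => [|m IHm].
  rewrite big_ord0 -(cards1 (0 : 'M[F]_(0, n))); apply: eq_card => A.
  by rewrite !inE flatmx0 mxrank0 sub0mx !eqxx.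
rewrite big_ord_recr /= -IHm -[#|frames U m.+1|]sum1_card.
rewrite (partition_big (@dsubmx F 1 m n) (mem (frames U m))) /=; last first.
  exact: frames_dsubmx.
rewrite -sum_nat_const; apply: eq_bigr => B frB.
have -> : (#|F| ^ \rank U - #|F| ^ m)%N = #|spanm U :\: spanm B|.
  move: frB; rewrite inE => /andP [/eqP rkB sBU].
  rewrite cardsD (setIidPr _) ?card_spanm ?rkB //.
  by apply/subsetP => d; rewrite !inE => /submx_trans; apply.
rewrite (reindex (fun v : 'rV_n => (col_mx v B : 'M_(1 + m, n)))) /=; last first.
  exists usubmx => [v _ | A]; first by rewrite col_mxKu.
  by rewrite inE => /andP [_ /eqP <-]; rewrite vsubmxK.
rewrite -sum1_card; apply: eq_bigl => v.
by rewrite col_mxKd eqxx andbT frames_col_mx.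
Qed.

End Frames.

Lemma card_frames_subspaces p (U : 'M[F]_(p, n)) m : #|frames U m| =
  (#|subspaces U m| * \prod_(j < m) (#|F| ^ m - #|F| ^ j))%N.
Proof.
rewrite -sum1_card (partition_big (@spanm F n m) (mem (subspaces U m))) /=; last first.
  by move=> A frA; apply: imset_f.
rewrite -sum_nat_const; apply: eq_bigr => _ /imsetP [A0 frA0 ->].
move: (frA0); rewrite inE => /andP [/eqP rkA0 sA0U].
transitivity #|frames A0 m|; first last.
  by rewrite card_frames rkA0.
rewrite -sum1_card; apply: eq_bigl => A; rewrite !inE.
apply/idP/idP => [/andP [/andP [-> _] /eqP eqA]|/andP [/eqP rkA sAA0]].
  apply/row_subP => j; have : row j A \in spanm A by rewrite inE row_sub.
  by rewrite eqA inE.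
have /eqmxP eqAA0 : (A == A0)%MS.
  by have [_ <-] := mxrank_leqif_eq sAA0; rewrite rkA rkA0.
rewrite rkA eqxx (submx_trans sAA0 sA0U); apply/eqP/setP => d.
by rewrite !inE eqAA0.
Qed.

Lemma card_subspaces p (U : 'M[F]_(p, n)) m :
  (m <= \rank U)%N -> #|subspaces U m| = qbinom #|F| (\rank U) m.
Proof.
move=> le_mU; symmetry; apply: qbinom_eq (card_finNzRing_gt1 F) le_mU _.
by rewrite -card_frames_subspaces card_frames.
Qed.

Lemma exists_submx_rank (U : 'M[F]_n) k : (k <= \rank U)%N ->
  exists2 W : 'M[F]_n, \rank W = k & (W <= U)%MS.
Proof.
move=> le_kU; exists (pid_mx k *m row_base U); last first.
  by apply: submx_trans (submxMl _ _) _; rewrite eq_row_base.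
rewrite mxrankMfree ?row_base_free // rank_pid_mx //.
exact: leq_trans le_kU (rank_leq_col U).
Qed.

End Subspaces.

Section Spreads.
Variables (F : finFieldType) (n : nat).

Lemma dir_kflats k v0 U0 :
  (@dir F n) @: kflats k (flat_of v0 U0) = subspaces U0 k.
Proof.
apply/setP => D; apply/imsetP/imsetP => [[A kA ->]|[A frA ->]].
  have [v [W [rkW sWU0 ->]]] := kflats_flat_of kA.
  have eqW : (castmx (rkW, erefl n) (row_base W) :=: W)%MS.
    exact: eqmx_trans (eqmx_cast _ _) (eq_row_base W).
  exists (castmx (rkW, erefl n) (row_base W)).
    by rewrite inE !eqW sWU0 andbT; apply/eqP.
  by rewrite dir_flat_of; apply/setP => d; rewrite !inE eqW.
move: frA; rewrite inE => /andP [/eqP rkA sAU0].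
exists (flat_of v0 <<A>>%MS).
  rewrite inE -{1}rkA -(mxrank_gen A) flat_of_is_flat /=.
  by apply: flat_of_sub (flat_of_self _ _) _; rewrite genmxE.
by rewrite dir_flat_of; apply/setP => d; rewrite !inE genmxE.
Qed.

Lemma card_uniform_spread k v0 U0 (M : {set {set 'rV[F]_n}}) c :
  M \subset kflats k (flat_of v0 U0) ->
  (forall S, is_spread k (flat_of v0 U0) S -> #|M :&: S| = c) ->
  #|M| = (#|subspaces U0 k| * c)%N.
Proof.
move=> sMT unifM; rewrite -(dir_kflats k v0) -sum1_card.
rewrite (partition_big (@dir F n) (mem ((@dir F n) @: kflats k (flat_of v0 U0)))) /=;
  last by move=> A MA; apply: imset_f (subsetP sMT A MA).
rewrite -sum_nat_const; apply: eq_bigr => _ /imsetP [A kA ->].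
have [v [W [rkW sWU0 ->]]] := kflats_flat_of kA; subst k.
rewrite dir_flat_of -(unifM _ (parallel_class_spread v0 sWU0)) -sum1_card.
apply: eq_bigl => B; rewrite in_setI inE.
by case MB: (B \in M); rewrite //= (subsetP sMT).
Qed.

Definition outer_parallels k (T : {set 'rV[F]_n}) (W : 'M[F]_n)
    : {set {set 'rV[F]_n}} :=
  [set B in parallel_class k [set: 'rV[F]_n] W | ~~ (B \subset T)].

Section SpreadExtension.
Variables (v0 : 'rV[F]_n) (U0 W0 : 'M[F]_n).
Hypothesis sW0U0 : (W0 <= U0)%MS.
Let k := \rank W0.
Let tau := flat_of v0 U0.

Lemma parallel_meet_flat_sub B z : B \in parallel_class k [set: 'rV[F]_n] W0 ->
  z \in B -> z \in tau -> B \subset tau.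
Proof.
rewrite inE => /andP [/setIdP [/is_flatP [v [W [_ ->]]] _]].
rewrite dir_flat_of => /eqP eqWW0 zB ztau.
by rewrite (flat_of_eq zB (flat_of_self z W0) eqWW0) flat_of_sub.
Qed.

Lemma spreadU_outer_parallels S : is_spread k tau S ->
  is_spread k [set: 'rV[F]_n] (S :|: outer_parallels k tau W0).
Proof.
move=> [sST disjS coverS].
have [sPT disjP coverP] := parallel_class_spread (0 : 'rV[F]_n) (submx1 W0).
rewrite flat_of_setT in sPT disjP coverP.
have sub_tau A : A \in S -> A \subset tau.
  by move/(subsetP sST); rewrite inE => /andP [].
have disj_outer A B : A \in S -> B \in outer_parallels k tau W0 -> [disjoint A & B].
  move=> SA /setIdP [PB notB]; apply/pred0P => z /=; apply/negbTE/andP => -[zA zB].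
  move/negP: notB; apply; apply: parallel_meet_flat_sub PB zB _.
  exact: subsetP (sub_tau A SA) z zA.
split.
- apply/subsetP => A /setUP [/(subsetP sST)|/setIdP [/(subsetP sPT) //]].
  by rewrite !inE subsetT andbT => /andP [].
- move=> A B /setUP [SA|OA] /setUP [SB|OB] neqAB.
  + exact: disjS.
  + exact: disj_outer.
  + by rewrite disjoint_sym; apply: disj_outer.
  + by case/setIdP: OA => PA _; case/setIdP: OB => PB _; apply: disjP.
- apply/setP => z; rewrite inE; apply/bigcupP; have [ztau|zNtau] := boolP (z \in tau).
    rewrite -coverS in ztau; case/bigcupP: ztau => A SA zA.
    by exists A; rewrite ?inE ?SA.
  have : z \in cover (parallel_class k [set: 'rV[F]_n] W0) by rewrite coverP inE.
  case/bigcupP => B PB zB; exists B => //; apply/setUP; right.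
  by rewrite inE PB /=; apply: contra zNtau => /subsetP; apply.
Qed.

Lemma card_setI_spread (L : {set {set 'rV[F]_n}}) x S :
  (forall S', is_spread k [set: 'rV[F]_n] S' -> #|L :&: S'| = x) ->
  is_spread k tau S ->
  #|(L :&: kflats k tau) :&: S| = (x - #|L :&: outer_parallels k tau W0|)%N.
Proof.
move=> spreadL spS; rewrite -(spreadL _ (spreadU_outer_parallels spS)).
have [sST _ _] := spS.
have disjSO : [disjoint S & outer_parallels k tau W0].
  apply/pred0P => B /=; apply/negbTE/andP => -[/(subsetP sST)].
  by rewrite !inE => /andP [_ ->] /andP [_].
have disjL : [disjoint L :&: S & L :&: outer_parallels k tau W0].
  exact: disjointW (subsetIr _ _) (subsetIr _ _) disjSO.
rewrite -setIA (setIidPr sST) setIUr cardsU (disjoint_setI0 disjL).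
by rewrite cards0 subn0 addnK.
Qed.

End SpreadExtension.
End Spreads.

Theorem theorem3p8 (F : finFieldType) (n k i x : nat)
  (L : {set {set 'rV[F]_n}}) (tau : {set 'rV[F]_n}) :
  (1 <= k)%N -> (k <= n - 1)%N ->
  L \subset kflats k [set: 'rV[F]_n] ->
  #|L| = (x * qbinom #|F| n k)%N ->
  (forall S, is_spread k [set: 'rV[F]_n] S -> #|L :&: S| = x) ->
  is_flat i tau -> (maxn k.+1 3 <= i)%N ->
  forall S, is_spread k tau S ->
    (#|(L :&: kflats k tau) :&: S|%:R : rat)
      = #|L :&: kflats k tau|%:R / (qbinom #|F| i k)%:R.
Proof.
move=> _ _ _ _ spreadL /is_flatP [v0 [U0 [rkU0 ->]]] le_i S spS.
have le_ki : (k <= \rank U0)%N.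
  by rewrite rkU0; apply: ltnW; move: le_i; rewrite geq_max => /andP [].
have [W0 rkW0 sW0U0] := exists_submx_rank le_ki; subst k.
have unif := card_setI_spread (v0 := v0) sW0U0 spreadL.
rewrite unif // (card_uniform_spread (subsetIr _ _) unif) card_subspaces // rkU0.
have qbinom_neq0 : (qbinom #|F| i (\rank W0))%:R != 0 :> rat.
  by rewrite Num.Theory.pnatr_eq0 -lt0n qbinom_gt0 ?card_finNzRing_gt1 // -rkU0.
by rewrite natrM mulrC mulKf.
Qed.
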